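(* Let $\mathcal{S} \subseteq M_n$ be a quantum graph. Then $\mathcal{S}$ is disconnected if and only if there exists a projection $P \in M_n$ with $P \neq 0$ and $P \neq I_n$ such that $P \mathcal{S} (I_n-P) = \{0\}$.
   Context: $M_n$ denotes the $n\times n$ complex matrices, $I_n$ the identity matrix. A projection is $P\in M_n$ with $P=P^2=P^\dagger$. A quantum graph on $M_n$ is an operator system: a linear subspace $\mathcal{S}\subseteq M_n$ closed under taking adjoints and containing $I_n$. For subspaces $\mathcal{U},\mathcal{V}\subseteq M_n$, $\mathcal{U}\mathcal{V}=\operatorname{span}\{UV : U\in\mathcal{U}, V\in\mathcal{V}\}$, $\mathcal{U}^0=\mathbb{C}I_n$ and $\mathcal{U}^{k+1}=\mathcal{U}^k\mathcal{U}$. For subsets, $P\mathcal{S}Q=\{PAQ : A\in\mathcal{S}\}$. A quantum graph $\mathcal{S}\subseteq M_n$ is connected if there exists $m\in\mathbb{N}$ with $\mathcal{S}^m=M_n$, and disconnected otherwise. *)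

From HB Require Import structures.
From mathcomp Require Import all_boot all_order all_algebra.
From mathcomp Require Import reals.
From mathcomp Require Import complex.
Set Implicit Arguments. Unset Strict Implicit. Unset Printing Implicit Defensive.
Import Order.TTheory GRing.Theory Num.Theory.
Local Open Scope ring_scope.

Definition adjmx (C : numClosedFieldType) (n : nat) (A : 'M[C]_n) : 'M[C]_n :=
  (map_mx Num.conj A)^T.

Definition is_projection (C : numClosedFieldType) (n : nat) (P : 'M[C]_n) : Prop :=
  P = P *m P /\ P = adjmx P.

Definition quantum_graph (C : numClosedFieldType) (n : nat)
    (S : {vspace 'M[C]_n}) : Prop :=
  (1%:M \in S) /\ (forall A, A \in S -> adjmx A \in S).

(* UV = span {U V : U in U, V in V}; by bilinearity it is spanned by
   the products of basis elements. *)
Definition mxvs_mul (C : fieldType) (n : nat) (U V : {vspace 'M[C]_n})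
    : {vspace 'M[C]_n} :=
  (<< [seq u *m v | u <- vbasis U, v <- vbasis V] >>)%VS.

Fixpoint mxvs_pow (C : fieldType) (n : nat) (U : {vspace 'M[C]_n}) (k : nat)
    : {vspace 'M[C]_n} :=
  match k with
  | 0 => (<[ (1%:M : 'M[C]_n) ]>)%VS
  | k'.+1 => mxvs_mul (mxvs_pow U k') U
  end.

Definition qg_connected (C : fieldType) (n : nat) (S : {vspace 'M[C]_n}) : Prop :=
  exists m : nat, mxvs_pow S m = fullv.

Definition qg_disconnected (C : fieldType) (n : nat) (S : {vspace 'M[C]_n}) : Prop :=
  ~ qg_connected S.

From mathcomp Require Import all_boot all_algebra.
From mathcomp Require Import reals complex.
From Stdlib Require Import Classical.
Import GRing.Theory.
Local Open Scope ring_scope.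
Local Open Scope sesquilinear_scope.
Set Implicit Arguments. Unset Strict Implicit. Unset Printing Implicit Defensive.

(* If P S (I - P) = 0 for a projection P then, S being self-adjoint, P commutes
   with S, hence with every power S^k; if some S^k were all of M_n, P would be
   central, i.e. 0 or I.  Conversely, the powers of S increase and stabilise at
   the unital *-algebra A generated by S.  If S is disconnected then A <> M_n, so
   by Burnside's theorem (via the classical descent to a rank-one element of A)
   A leaves invariant a nonzero proper subspace U of row vectors, and the
   orthogonal projection P onto U satisfies P A (I - P) = 0. *)

Section SubspaceProduct.
Variables (C : fieldType) (n : nat).
Implicit Types U V W : {vspace 'M[C]_n}.

Lemma mem_mxvs_mul U V u v : u \in U -> v \in V -> u *m v \in mxvs_mul U V.
Proof.
move=> uU vV; rewrite (coord_vbasis uU) (coord_vbasis vV) mulmx_suml.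
apply: rpred_sum => i _; rewrite mulmx_sumr; apply: rpred_sum => j _.
rewrite -scalemxAl -scalemxAr; do 2!apply: rpredZ.
by apply/memv_span/allpairs_f; apply: mem_nth; rewrite size_tuple.
Qed.

Lemma mxvs_mul_ind U V W (f : 'M[C]_n -> 'M[C]_n) (s : C -> C) :
  {morph f : x y / x + y} -> (forall a x, f (a *: x) = s a *: f x) ->
  (forall u v, u \in U -> v \in V -> f (u *m v) \in W) ->
  forall x, x \in mxvs_mul U V -> f x \in W.
Proof.
move=> fD fZ fUV x /(coord_span (X := in_tuple _)) ->.
have f0 : f 0 = 0 by apply: (addrI (f 0)); rewrite -fD !addr0.
rewrite (big_morph f fD f0); apply: rpred_sum => i _; rewrite fZ rpredZ //.
have /allpairsP [[u v] [uU vV ->]] := mem_nth 0 (ltn_ord i).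
by apply: fUV; apply: vbasis_mem.
Qed.

End SubspaceProduct.

Section Powers.
Variables (C : fieldType) (n : nat) (S : {vspace 'M[C]_n}).

Lemma mxvs_pow_mul a b x y :
  x \in mxvs_pow S a -> y \in mxvs_pow S b -> x *m y \in mxvs_pow S (a + b).
Proof.
elim: b y => [|b IHb] y xSa.
  by case/vlineP=> c ->; rewrite addn0 -scalemxAr mulmx1 rpredZ.
rewrite addnS; apply: (mxvs_mul_ind (f := mulmx x) (s := id)) => [u v|c u|u v uSb vS].
- exact: mulmxDr.
- by rewrite scalemxAr.
by rewrite mulmxA mem_mxvs_mul ?IHb.
Qed.

Hypothesis S1 : 1%:M \in S.

Lemma mem1_mxvs_pow k : 1%:M \in mxvs_pow S k.
Proof.
elim: k => [|k IHk]; first exact: memv_line.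
by rewrite -[1%:M]mulmx1 mem_mxvs_mul.
Qed.

Lemma mxvs_pow_subS k : (mxvs_pow S k <= mxvs_pow S k.+1)%VS.
Proof. by apply/subvP => x xSk; rewrite -[x]mulmx1 mem_mxvs_mul. Qed.

Lemma mxvs_pow_leq j k : (j <= k)%N -> (mxvs_pow S j <= mxvs_pow S k)%VS.
Proof.
move=> le_jk; rewrite -(subnKC le_jk); elim: (k - j)%N => [|i IHi]; first by rewrite addn0.
by rewrite addnS (subv_trans IHi) ?mxvs_pow_subS.
Qed.

Lemma subv_mxvs_pow k : (0 < k)%N -> (S <= mxvs_pow S k)%VS.
Proof.
move=> k_gt0; apply: subv_trans _ (mxvs_pow_leq k_gt0); apply/subvP => x xS.
by rewrite -[x]mul1mx mem_mxvs_mul ?memv_line.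
Qed.

Lemma mxvs_pow_stationary : exists k, mxvs_pow S k.+1 = mxvs_pow S k.
Proof.
apply: NNPP => no_stop.
have grow k : (k <= \dim (mxvs_pow S k))%N.
  elim: k => // k IHk; apply: leq_ltn_trans IHk _.
  rewrite (ltn_leqif (dimv_leqif_eq (mxvs_pow_subS k))).
  by apply/eqP => Sk; apply: no_stop; exists k.
by have := grow (\dim (fullv : {vspace 'M[C]_n})).+1; rewrite leqNgt ltnS dimvS ?subvf.
Qed.

Lemma mxvs_pow_algebra : exists k, [/\ (S <= mxvs_pow S k)%VS &
  forall x y, x \in mxvs_pow S k -> y \in mxvs_pow S k -> x *m y \in mxvs_pow S k].
Proof.
have [k Sk] := mxvs_pow_stationary.
have stable j : (k <= j)%N -> mxvs_pow S j = mxvs_pow S k.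
  by move/subnKC <-; elim: (j - k)%N => [|i IHi]; rewrite ?addn0 // addnS /= IHi.
exists k.+1; rewrite stable //; split; first by rewrite -(stable k.+1) ?subv_mxvs_pow.
by move=> x y xS yS; rewrite -(stable (k + k)) ?leq_addr ?mxvs_pow_mul.
Qed.

End Powers.

Lemma trmxC_mul (C : numClosedFieldType) m n p (A : 'M[C]_(m, n)) (B : 'M[C]_(n, p)) :
  (A *m B)^t* = B^t* *m A^t*.
Proof. by rewrite trmx_mul map_mxM. Qed.

Section Adjoint.
Variables (C : numClosedFieldType) (n : nat).
Implicit Types A B : 'M[C]_n.

Lemma adjmxE A : adjmx A = A^t*.
Proof. by rewrite /adjmx map_trmx. Qed.

Lemma adjmxD A B : adjmx (A + B) = adjmx A + adjmx B.
Proof. by apply/matrixP => i j; rewrite !mxE rmorphD. Qed.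

Lemma adjmxZ a A : adjmx (a *: A) = a^* *: adjmx A.
Proof. by apply/matrixP => i j; rewrite !mxE rmorphM. Qed.

Lemma adjmxM A B : adjmx (A *m B) = adjmx B *m adjmx A.
Proof. by rewrite !adjmxE trmxC_mul. Qed.

Lemma adjmxK A : adjmx (adjmx A) = A.
Proof. by rewrite !adjmxE trmxCK. Qed.

Lemma adjmx1 : adjmx 1%:M = 1%:M :> 'M[C]_n.
Proof. by rewrite adjmxE trmx1 map_mx1. Qed.

Lemma mxvs_pow_adj (S : {vspace 'M[C]_n}) :
  quantum_graph S -> forall k x, x \in mxvs_pow S k -> adjmx x \in mxvs_pow S k.
Proof.
case=> S1 S_adj; elim=> [|k IHk] x.
  by case/vlineP=> c ->; rewrite adjmxZ adjmx1 rpredZ ?memv_line.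
apply: (mxvs_mul_ind (f := @adjmx C n) (s := Num.conj)) => [|a A|u v uSk vS].
- exact: adjmxD.
- exact: adjmxZ.
rewrite adjmxM -add1n mxvs_pow_mul ?IHk //.
by apply: (subvP (subv_mxvs_pow S1 _)) => //; exact: S_adj.
Qed.

End Adjoint.

Lemma stable_eigenvector (C : numClosedFieldType) n (V K : 'M[C]_n) :
  stablemx V K -> V != 0 ->
  exists a, exists2 z : 'rV_n, z != 0 & (z <= V)%MS && (z <= eigenspace K a)%MS.
Proof.
move=> VK V0; have rV : (0 < \rank V)%N by rewrite lt0n mxrank_eq0.
have [a /eigenvalueP [z0 z0K z00]] := eigenvalue_closed (restrictmx V K) rV.
have : stablemx z0 (restrictmx V K) by rewrite z0K scalemx_sub.
rewrite (stablemx_restrict _ VK) => /eigenvectorP [b zK].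
exists b, (z0 *m row_base V); first by rewrite mulmx_free_eq0 ?row_base_free.
by rewrite zK andbT (submx_trans (submxMl _ _)) ?eq_row_base.
Qed.

Section Burnside.
Variables (C : numClosedFieldType) (n : nat) (A : {vspace 'M[C]_n}).
Hypothesis A1 : 1%:M \in A.
Hypothesis A_mul : forall x y, x \in A -> y \in A -> x *m y \in A.
Hypothesis A_adj : forall x, x \in A -> adjmx x \in A.
Hypothesis A_irr : forall m (U : 'M[C]_(m, n)),
  (forall M, M \in A -> stablemx U M) -> U = 0 \/ row_full U.

Lemma irr_transitive (v y : 'rV[C]_n) : v != 0 -> exists2 B, B \in A & v *m B = y.
Proof.
move=> v0; pose b (k : 'I_(\dim A)) := (vbasis A)`_k.
have bA k : b k \in A by rewrite vbasis_mem ?mem_nth ?size_tuple.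
pose U := \matrix_k (v *m b k).
have vA_U B : B \in A -> (v *m B <= U)%MS.
  move=> BA; rewrite (coord_vbasis BA) mulmx_sumr summx_sub // => k _.
  by rewrite -scalemxAr scalemx_sub // -(rowK (fun k => v *m b k)) row_sub.
have U_stable M : M \in A -> stablemx U M.
  by move=> MA; apply/row_subP => k; rewrite row_mul rowK -mulmxA vA_U ?A_mul.
have [U0|U_full] := A_irr U_stable.
  by have := vA_U _ A1; rewrite mulmx1 U0 => /submx0null/eqP; rewrite (negbTE v0).
have /submxP [w ->] := submx_full y U_full.
exists (\sum_k w 0 k *: b k); first by rewrite rpred_sum // => k _; rewrite rpredZ.
by rewrite mulmx_sumr mulmx_sum_row; apply: eq_bigr => k _; rewrite rowK scalemxAr.
Qed.

(* K = B T maps u to a row of T that is not a multiple of u, while K - a kills an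
   eigenvector z of K inside the row space of T: so T (K - a) is nonzero and of
   smaller rank. *)
Lemma irr_rank_descent T : T \in A -> (1 < \rank T)%N ->
  exists2 T', T' \in A & (0 < \rank T' < \rank T)%N.
Proof.
move=> TA rT; have T0 : T != 0 by rewrite -mxrank_eq0 -lt0n (ltnW rT).
set u := nz_row T; have u0 : u != 0 by rewrite nz_row_eq0.
have /row_subPn [j not_Tj_u] : ~~ (T <= u)%MS.
  by apply: contraL rT => /mxrankS; rewrite -leqNgt => /leq_trans; apply; apply: rank_leq_row.
have [B BA uB] := irr_transitive (delta_mx 0 j) u0.
pose K := B *m T.
have uK : u *m K = row j T by rewrite mulmxA uB -rowE.
have TK : stablemx T K by rewrite /K mulmxA submxMl.
have [a [z z0 /andP [zT zK]]] := stable_eigenvector TK T0.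
exists (T *m (K - a%:M)).
  by rewrite mulmxBr mul_mx_scalar rpredB ?rpredZ ?A_mul.
apply/andP; split.
  rewrite lt0n mxrank_eq0; apply: contraNneq not_Tj_u => T'0.
  have /submxP [x ux] : (u <= T)%MS := nz_row_sub T.
  have : u *m (K - a%:M) = 0 by rewrite ux -mulmxA T'0 mulmx0.
  by rewrite mulmxBr uK mul_mx_scalar => /subr0_eq ->; rewrite scalemx_sub.
rewrite -(mxrank_mul_ker T (K - a%:M)) -[X in (X < _)%N]addn0 ltn_add2l.
have : (z <= T :&: kermx (K - a%:M))%MS by rewrite sub_capmx zT.
by move/mxrankS; rewrite rank_rV z0.
Qed.

Lemma irr_rank1_mem : (0 < n)%N -> exists2 T, T \in A & \rank T = 1%N.
Proof.
move=> n_gt0; have [r] := ubnP (\rank (1%:M : 'M[C]_n)).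
have : (0 < \rank (1%:M : 'M[C]_n))%N by rewrite mxrank1.
elim: r (1%:M) A1 => // r IHr T TA rT_gt0; rewrite ltnS => rT_le.
case: (ltngtP (\rank T) 1) => [|rT_gt1|]; last by exists T.
  by rewrite ltnS leqNgt rT_gt0.
have [T' T'A /andP [rT'_gt0 rT'_lt]] := irr_rank_descent TA rT_gt1.
exact: IHr T'A rT'_gt0 (leq_trans rT'_lt rT_le).
Qed.

Lemma irr_delta_mem i j : delta_mx i j \in A.
Proof.
have [T TA rT] := irr_rank1_mem (leq_ltn_trans (leq0n i) (ltn_ord i)).
set u := nz_row T; have u0 : u != 0 by rewrite nz_row_eq0 -mxrank_eq0 rT.
have /submxP [D TD] : (T <= u)%MS.
  by rewrite -(mxrank_leqif_sup (nz_row_sub T)).2 rank_rV u0 rT.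
have D0 : D^t* != 0.
  apply/eqP => /(congr1 (fun X => X^t*)); rewrite trmxCK trmx0 map_mx0 => D_0.
  by move: rT; rewrite TD D_0 mul0mx mxrank0.
have [B BA DB] := irr_transitive (delta_mx 0 i) D0.
have [B' B'A uB'] := irr_transitive (delta_mx 0 j) u0.
have BD : adjmx B *m D = delta_mx i 0.
  by rewrite adjmxE -[D]trmxCK -trmxC_mul DB trmx_delta map_delta_mx.
by rewrite -(mul_delta_mx (0 : 'I_1)) -BD -uB' mulmxA -(mulmxA (adjmx B)) -TD !A_mul ?A_adj.
Qed.

Lemma burnside_mxvs : A = fullv.
Proof.
apply/vspaceP => M; rewrite memvf (matrix_sum_delta M).
by rewrite rpred_sum // => i _; rewrite rpred_sum // => j _; rewrite rpredZ ?irr_delta_mem.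
Qed.

End Burnside.

Lemma burnside_stable_subspace (C : numClosedFieldType) n (A : {vspace 'M[C]_n}) :
  1%:M \in A -> (forall x y, x \in A -> y \in A -> x *m y \in A) ->
  (forall x, x \in A -> adjmx x \in A) -> A != fullv ->
  exists m (U : 'M[C]_(m, n)),
    [/\ forall M, M \in A -> stablemx U M, U != 0 & ~~ row_full U].
Proof.
move=> A1 A_mul A_adj /eqP A_proper; apply: NNPP => no_stable; apply: A_proper.
apply: burnside_mxvs => // m U U_stable; have [|U0] := eqVneq U 0; [by left | right].
by apply/idPn => U_nfull; apply: no_stable; exists m, U.
Qed.

Lemma central_idempotent_mx (F : fieldType) n (P : 'M[F]_n) :
  P *m P = P -> (forall M, comm_mx P M) -> P = 0 \/ P = 1%:M.
Proof.
move=> PP P_central; have [|P0] := eqVneq P 0; [by left | right].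
set u := nz_row P; have u0 : u != 0 by rewrite nz_row_eq0.
have uP : u *m P = u.
  by have /submxP [x ->] : (u <= P)%MS := nz_row_sub P; rewrite -mulmxA PP.
have [B uB] : exists B, u *m B = 1%:M by apply/row_freeP; rewrite /row_free rank_rV u0.
have yP (y : 'rV_n) : y *m P = y.
  by rewrite -[y]mul1mx -uB -(mulmxA u) -mulmxA -P_central mulmxA uP.
by apply/row_matrixP => i; rewrite rowE yP row1.
Qed.

Lemma comm_mxvs_pow (F : fieldType) n (S : {vspace 'M[F]_n}) (P : 'M[F]_n) k x :
  (forall y, y \in S -> comm_mx P y) -> x \in mxvs_pow S k -> comm_mx P x.
Proof.
move=> P_comm; elim: k x => [|k IHk] x.
  by case/vlineP=> c ->; rewrite scalemx1; apply: comm_mx_scalar.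
move=> xSk; apply/eqP; rewrite -subr_eq0 -memv0; move: x xSk.
apply: (mxvs_mul_ind (f := fun x => P *m x - x *m P) (s := id)) => [x y|c x|u v uSk vS].
- by rewrite mulmxDr mulmxDl opprD addrACA.
- by rewrite scalerBr scalemxAr scalemxAl.
by rewrite memv0 mulmxA IHk // -!mulmxA P_comm // subrr.
Qed.

Lemma projection_comm (C : numClosedFieldType) n (P A : 'M[C]_n) : is_projection P ->
  P *m A *m (1%:M - P) = 0 -> P *m adjmx A *m (1%:M - P) = 0 -> comm_mx P A.
Proof.
case=> PP P_adj; have corner B : P *m B *m (1%:M - P) = 0 -> P *m B = P *m B *m P.
  by rewrite mulmxBr mulmx1 => /subr0_eq.
move=> /corner PA /corner /(congr1 (@adjmx _ _)).
by rewrite !adjmxM adjmxK -P_adj /comm_mx PA mulmxA => <-.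
Qed.

Lemma stable_projection (C : numClosedFieldType) m n (U : 'M[C]_(m, n)) :
  U != 0 -> ~~ row_full U ->
  exists P, [/\ is_projection P, P <> 0, P <> 1%:M &
                forall M, stablemx U M -> P *m M *m (1%:M - P) = 0].
Proof.
(* Q is an orthonormal basis of the row space of U, and Q^* Q the orthogonal
   projection onto it. *)
move=> U0 U_nfull; pose Q := schmidt (row_base U).
have QU : (Q :=: U)%MS := eqmx_trans (eqmx_schmidt_free (row_base_free U)) (eq_row_base U).
have QQ : Q *m Q^t* = 1%:M by apply/unitarymxP/schmidt_unitarymx/rank_leq_col.
have QPQ : Q *m (Q^t* *m Q) = Q by rewrite mulmxA QQ mul1mx.
exists (Q^t* *m Q); split.
- by split; [rewrite -mulmxA QPQ | rewrite adjmxE trmxC_mul trmxCK].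
- by move=> P0; move: U0; rewrite -mxrank_eq0 -QU mxrank_eq0 -QPQ P0 mulmx0 eqxx.
- move=> P1; move: U_nfull; rewrite /row_full -QU eqn_leq rank_leq_col /=.
  by rewrite -[X in (X <= _)%N](mxrank1 C n) -P1 mxrankM_maxr.
move=> M; rewrite -(eqmxMr M QU) -QU => /submxP [E QM].
by rewrite -(mulmxA (Q^t*)) QM mulmxBr mulmx1 -!mulmxA QPQ subrr.
Qed.

Unset Implicit Arguments.

Theorem theorem3p3 (R : realType) (n : nat) (S : {vspace 'M[R[i]]_n}) :
  quantum_graph S ->
  (qg_disconnected S <->
   exists P : 'M[R[i]]_n,
     [/\ is_projection P, P <> 0, P <> 1%:M &
         forall A, A \in S -> P *m A *m (1%:M - P) = 0]).
Proof.
move=> S_qg; have [S1 S_adj] := S_qg; split => [S_disc|[P [P_proj P0 P1 PSP]] [m Sm]].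
  have [k [S_Sk Sk_mul]] := mxvs_pow_algebra S1.
  have [|m [U [U_stable U0 U_nfull]]] :=
    burnside_stable_subspace (mem1_mxvs_pow S1 k) Sk_mul (mxvs_pow_adj S_qg (k := k)).
    by apply/eqP => Sk_full; apply: S_disc; exists k.
  have [P [P_proj P0 P1 PUP]] := stable_projection U0 U_nfull.
  by exists P; split => // M MS; rewrite PUP ?U_stable ?(subvP S_Sk).
have P_comm x : x \in mxvs_pow S m -> comm_mx P x.
  by apply: comm_mxvs_pow => y yS; apply: projection_comm; rewrite ?PSP ?S_adj.
have P_central M : comm_mx P M by apply: P_comm; rewrite Sm memvf.
by case: (central_idempotent_mx (esym P_proj.1) P_central).
Qed.
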